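(* Let $\mathcal{T}$ be a teacher class over $\mathcal{X},\mathcal{Y},\Phi$ and let $H\subseteq\mathcal{X}\times\mathcal{Y}$ be a non-empty history that is consistent with $\mathcal{T}$. Then \[\min_{\mathcal{A}} M(\mathcal{A},\mathcal{T},H)=\mathrm{DFFdim}(\mathcal{T},H),\] where the minimum is over all deterministic DFF algorithms $\mathcal{A}$.
   Context: Setting. $\mathcal{X}$ is a set of examples, $\mathcal{Y}$ a finite set of labels, and $\Phi$ a set of Boolean features $\phi:\mathcal{X}\to\{0,1\}$; $\bot$ denotes a null symbol not in $\mathcal{X}\cup\mathcal{Y}\cup\Phi$. A teacher over $\mathcal{X},\mathcal{Y},\Phi$ is a pair $T=(\ell,\psi)$ with $\ell:\mathcal{X}\to\mathcal{Y}$ and $\psi:\mathcal{X}\times\mathcal{X}\to\Phi\cup\{\bot\}$ such that whenever $\ell(x)\neq\ell(\hat x)$, $\phi:=\psi(x,\hat x)\in\Phi$, $\phi(x)=1$ and $\phi(\hat x)=0$. A teacher class is a set of teachers. A history is a non-empty set $H\subseteq\mathcal{X}\times\mathcal{Y}$; a teacher $(\ell,\psi)$ is consistent with $H$ if $\ell(x)=y$ for all $(x,y)\in H$; $\mathcal{T}_H$ is the set of teachers in $\mathcal{T}$ consistent with $H$, and $\mathcal{T}$ is consistent with $H$ if $\mathcal{T}_H\neq\emptyset$. DFF protocol. A DFF algorithm is given $H$ in advance. In each round $t=1,2,\dots$: an example $x_t\in\mathcal{X}$ arrives; the algorithm outputs a predicted label $\hat y_t$ and an explanation $\hat x_t$,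 where $(\hat x_t,\hat y_t)$ must belong to $H\cup\{(x_s,y_s):s<t\}$; if $\hat y_t=y_t$ (the true label of $x_t$) the algorithm learns only that it was correct; otherwise (a mistake) it receives $y_t$ and a feature $\phi_t\in\Phi$. The feedback of round $t$ is consistent with a teacher $(\ell,\psi)$ if $y_t=\ell(x_t)$ and, when $\hat y_t\neq y_t$, $\phi_t=\psi(x_t,\hat x_t)$. $M(\mathcal{A},\mathcal{T},H)$ denotes the supremum, over all finite example sequences and all teachers $T\in\mathcal{T}_H$, of the number of mistakes of $\mathcal{A}$ when all feedback is consistent with $T$. DFF dimension. A DFF tree is a rooted tree whose nodes are triples $\langle y,\phi,x\rangle$ with $y\in\mathcal{Y}\cup\{\bot\}$, $\phi\in\Phi\cup\{\bot\}$, $x\in\mathcal{X}\cup\{\bot\}$, such that the root has $y=\phi=\bot$, a node has $x=\bot$ iff it is a leaf, every edge is labeled by a pair $(\hat x,\hat y)\in\mathcal{X}\times\mathcal{Y}$, and every non-root node $\langle y,\phi,x\rangle$ with incoming edge $(\hat x,\hat y)$ has $\phi\neq\bot$ whenever $y\neq\hat y$. For a parent–child pair $\langle\cdot,\cdot,x\rangle\xrightarrow{(\hat x,\hat y)}\langle y,\phi,\cdot\rangle$ on a path, $(x,y)$ is called a labeled example in that path. A path from the root is consistent with a teacher $(\ell,\psi)$ if for every such parent–child pair on it, $\ell(x)=y$ and, if $y\neq\hat y$, $\psi(x,\hat x)=\phi$. Given $\mathcal{T}$ consistent with $H$, a DFF tree is shattered by $\mathcal{T}$ and $H$ if: (1)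 every non-root node $\langle y,\phi,x\rangle$ with incoming edge $(\hat x,\hat y)$ has $y\neq\hat y$; (2) the labels of the outgoing edges of each non-leaf node $v$ are exactly the pairs that belong to $H$ or are labeled examples in the path from the root to $v$; (3) every root-to-leaf path is consistent with some teacher in $\mathcal{T}_H$; (4) all root-to-leaf paths have the same number of edges, called the height. $\mathrm{DFFdim}(\mathcal{T},H)$ is the maximal height of a DFF tree shattered by $\mathcal{T}$ and $H$. *)

From mathcomp Require Import all_boot.
From Stdlib Require Import ClassicalEpsilon.

Set Implicit Arguments.
Unset Strict Implicit.
Unset Printing Implicit Defensive.

Section DFF.

Variables (X : Type) (Y : finType) (Phi : (X -> bool) -> Prop).

(** Features are Boolean functions on X; the null symbol ⊥ is [None]. *)
Definition feat := X -> bool.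

Record teacher := Teacher {
  lab : X -> Y;
  expl : X -> X -> option feat
}.

Definition is_teacher (T : teacher) : Prop :=
  forall x xh, lab T x <> lab T xh ->
    exists phi, expl T x xh = Some phi /\ Phi phi /\ phi x = true /\ phi xh = false.

Definition teacher_class (TC : teacher -> Prop) : Prop :=
  forall T, TC T -> is_teacher T.

Definition consistent (T : teacher) (H : X * Y -> Prop) : Prop :=
  forall p, H p -> lab T p.1 = p.2.

Definition TH (TC : teacher -> Prop) (H : X * Y -> Prop) (T : teacher) : Prop :=
  TC T /\ consistent T H.

(** ** Extended naturals (None = +oo) and suprema of sets of naturals *)
Definition enat := option nat.

Definition ele (a b : enat) : Prop :=
  match a, b with
  | _, None => True
  | None, Some _ => False
  | Some m, Some n => m <= n
  end.

Definition is_esup (S : nat -> Prop) (e : enat) : Prop :=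
  match e with
  | Some n => (forall m, S m -> m <= n) /\
              (forall k, (forall m, S m -> m <= k) -> n <= k)
  | None => forall k, exists m, S m /\ k < m
  end.

Definition esup (S : nat -> Prop) : enat :=
  epsilon (inhabits None) (is_esup S).

(** Feedback of a round: [None] = "correct";
    [Some (y, phi)] = mistake, with true label y and feature phi. *)
Definition feedback := option (Y * option feat).

Definition interaction := seq (X * feedback).

(** A deterministic DFF algorithm maps the past interaction and the current
    example x_t to its output (explanation x̂_t, predicted label ŷ_t). *)
Definition dff_alg := interaction -> X -> X * Y.

Fixpoint revealed (A : dff_alg) (pre rest : interaction) : seq (X * Y) :=
  match rest with
  | [::] => [::]
  | (x, fb) :: r =>
      (x, match fb with Some (y, _) => y | None => (A pre x).2 end)
        :: revealed A (rcons pre (x, fb)) r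
  end.

Fixpoint protocol_hist (A : dff_alg) (pre rest : interaction) : Prop :=
  match rest with
  | [::] => True
  | (x, fb) :: r =>
      match fb with
      | None => True
      | Some (y, f) => y != (A pre x).2 /\ exists phi, f = Some phi /\ Phi phi
      end /\ protocol_hist A (rcons pre (x, fb)) r
  end.

Definition valid_alg (H : X * Y -> Prop) (A : dff_alg) : Prop :=
  forall (h : interaction) (x : X), protocol_hist A [::] h ->
    H (A h x) \/ List.In (A h x) (revealed A [::] h).

(** Number of mistakes of A on the example sequence xs when all feedback is
    consistent with teacher T (the run is then fully determined). *)
Fixpoint mistakes (A : dff_alg) (T : teacher) (pre : interaction) (xs : seq X)
  : nat :=
  match xs with
  | [::] => 0
  | x :: r =>
      let o := A pre x in
      let y := lab T x in
      if o.2 == y then mistakes A T (rcons pre (x, None)) r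
      else (mistakes A T (rcons pre (x, Some (y, expl T x o.1))) r).+1
  end.

Definition Mbound (A : dff_alg) (TC : teacher -> Prop) (H : X * Y -> Prop)
  : enat :=
  esup (fun m => exists T, TH TC H T /\ exists xs, mistakes A T [::] xs = m).

(** A node is a triple <y, phi, x>; x = ⊥ iff the node is a leaf.  The
    outgoing edges of an internal node are indexed by their labels (x̂, ŷ);
    only the children at the labels allowed by condition (2) are part of
    the tree (the others are ignored). *)
Inductive dfftree : Type :=
  | DLeaf : option Y -> option feat -> dfftree
  | DNode : option Y -> option feat -> X -> (X -> Y -> dfftree) -> dfftree.

Definition ty (t : dfftree) : option Y :=
  match t with DLeaf y _ => y | DNode y _ _ _ => y end.
Definition tphi (t : dfftree) : option feat :=
  match t with DLeaf _ f => f | DNode _ f _ _ => f end.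

Definition in_Phi_or_bot (f : option feat) : Prop :=
  match f with None => True | Some phi => Phi phi end.

(** A parent–child pair <_,_,x> --(x̂,ŷ)--> <y,phi,_> on a path. *)
Record edge_info := EdgeInfo {
  e_x : X; e_xh : X; e_yh : Y; e_y : option Y; e_phi : option feat }.

Definition path_consistent (T : teacher) (C : seq edge_info) : Prop :=
  forall c, List.In c C ->
    Some (lab T (e_x c)) = e_y c /\
    (e_y c <> Some (e_yh c) -> expl T (e_x c) (e_xh c) = e_phi c).

(** [shat TC H t L C d]: the subtree t (reached by a path whose labeled
    examples are L and whose parent–child pairs are C) satisfies conditions
    (1)–(4) with all its root-to-leaf paths having exactly d more edges. *)
Fixpoint shat (TC : teacher -> Prop) (H : X * Y -> Prop) (t : dfftree)
    (L : seq (X * Y)) (C : seq edge_info) (d : nat) : Prop :=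
  match t, d with
  | DLeaf _ _, 0 => exists T, TH TC H T /\ path_consistent T C
  | DNode _ _ x ch, d'.+1 =>
      forall xh yh, (H (xh, yh) \/ List.In (xh, yh) L) ->
        let c := ch xh yh in
        in_Phi_or_bot (tphi c) /\
        (ty c <> Some yh -> tphi c <> None) /\
        ty c <> Some yh /\
        shat TC H c
          (L ++ match ty c with Some y => [:: (x, y)] | None => [::] end)
          (rcons C (EdgeInfo x xh yh (ty c) (tphi c))) d'
  | _, _ => False
  end.

Definition shattered (TC : teacher -> Prop) (H : X * Y -> Prop) (t : dfftree)
    (d : nat) : Prop :=
  ty t = None /\ tphi t = None /\ shat TC H t [::] [::] d.

Definition DFFdim (TC : teacher -> Prop) (H : X * Y -> Prop) : enat :=
  esup (fun d => exists t, shattered TC H t d).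

End DFF.

From mathcomp Require Import all_boot.
From Stdlib Require Import ClassicalEpsilon Classical.

Set Implicit Arguments.
Unset Strict Implicit.
Unset Printing Implicit Defensive.

(** Lower bound: an adversary walks down a shattered tree of height d.  At each
    node it presents the node's example; whatever pair (x̂, ŷ) the algorithm
    outputs is an outgoing edge, whose child carries a label different from ŷ
    and a feature, and the path followed stays consistent with some teacher.
    So every round is a mistake.

    Upper bound: in the style of the standard optimal algorithm, predict an
    allowed pair (x̂, ŷ) such that every possible mistake feedback strictly
    lowers the dimension of the surviving teachers and history.  Such a pair
    exists whenever the dimension K is finite: otherwise every allowed edge
    has a witness subtree of height at least K, and truncating these subtrees
    to height K and hanging them below the current example gives a shattered
    tree of height K + 1. *)

Lemma ex_least_upper_bound (S : nat -> Prop) k : (forall m, S m -> m <= k) ->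
  exists n, (forall m, S m -> m <= n) /\ (forall j, (forall m, S m -> m <= j) -> n <= j).
Proof.
move=> ubk; apply: NNPP => noleast; move: ubk.
elim/ltn_ind: k => j IH ubj; apply: noleast; exists j; split=> // i ubi.
by rewrite leqNgt; apply/negP => /IH; apply.
Qed.

Lemma ex_max_bounded (S : nat -> Prop) k : S 0 -> (forall m, S m -> m <= k) ->
  exists n, S n /\ forall m, S m -> m <= n.
Proof.
move=> S0 /ex_least_upper_bound [[|n] [ubn leastn]]; first by exists 0.
exists n.+1; split=> //; apply: NNPP => notSn; suff: n.+1 <= n by rewrite ltnn.
apply: leastn => m Sm; move: (ubn m Sm); rewrite leq_eqVlt ltnS => /orP [/eqP eq_m|//].
by rewrite eq_m in Sm.
Qed.

Lemma esup_spec (S : nat -> Prop) : is_esup S (esup S).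
Proof.
apply: epsilon_spec; case: (classic (exists k, forall m, S m -> m <= k)).
  by move=> [k /ex_least_upper_bound [n ?]]; exists (Some n).
move=> unbounded; exists None => k; apply: NNPP => nobigger; apply: unbounded.
exists k => m Sm; rewrite leqNgt; apply/negP => ltkm; apply: nobigger; by exists m.
Qed.

Lemma esup_sub (D M : nat -> Prop) : (forall d, D d -> M d) -> ele (esup D) (esup M).
Proof.
move=> DM; have := esup_spec D; have := esup_spec M.
case: (esup D) => [n|]; case: (esup M) => [m|] //=.
- by move=> [ubm _] [_ leastn]; apply: leastn => d /DM /ubm.
- move=> [ubm _] unbounded; have [d [/DM/ubm led ltd]] := unbounded m.
  by rewrite leqNgt ltd in led.
Qed.

Lemma esup_eq (D M : nat -> Prop) : (forall d, D d -> M d) ->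
  (forall k, (forall d, D d -> d <= k) -> forall m, M m -> m <= k) -> esup M = esup D.
Proof.
move=> DM bound; have := esup_sub DM; have := esup_spec D; have := esup_spec M.
case: (esup D) => [n|]; case: (esup M) => [m|] //= + [ubn _].
- move=> [_ leastm] lenm; congr Some; apply/eqP.
  by rewrite eqn_leq lenm andbT; apply: leastm; apply: bound.
- move=> unbounded _; have [m [/(bound n ubn) lemn ltnm]] := unbounded n.
  by rewrite leqNgt ltnm in lemn.
Qed.

Section Trees.
Variables (X : Type) (Y : finType) (Phi : (X -> bool) -> Prop) (H : X * Y -> Prop).

Lemma path_consistent_rcons (T : teacher X Y) C e :
  path_consistent T (rcons C e) <-> path_consistent T C /\ path_consistent T [:: e].
Proof.
rewrite /path_consistent -cats1; split.
  by move=> pc; split=> c hc; apply: pc; apply/List.in_app_iff; [left|right].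
by move=> [pcC pce] c /List.in_app_iff [] hc; [apply: pcC|apply: pce].
Qed.

Lemma shat_weaken V1 V2 d t L1 L2 C1 C2 :
  (forall p, List.In p L2 -> List.In p L1) ->
  (forall T, TH V1 H T -> path_consistent T C1 -> TH V2 H T /\ path_consistent T C2) ->
  shat Phi V1 H t L1 C1 d -> shat Phi V2 H t L2 C2 d.
Proof.
elim: d t L1 L2 C1 C2 => [|d IH] [y f|y f x ch] L1 L2 C1 C2 subL subT //=.
  by move=> [T [TH_T pcT]]; exists T; apply: subT.
move=> sh xh yh adm; have adm1 : H (xh, yh) \/ List.In (xh, yh) L1.
  by case: adm => [|/subL]; [left|right].
have [? [? [? sh_c]]] := sh xh yh adm1.
do 3!split=> //; apply: IH sh_c.
  by move=> p /List.in_app_iff [/subL|] ?; apply/List.in_app_iff; [left|right].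
move=> T TH_T /path_consistent_rcons [pcT pce]; have [? ?] := subT T TH_T pcT.
by split=> //; apply/path_consistent_rcons.
Qed.

Section NonemptyHistory.
Variable p0 : X * Y.
Hypothesis Hp0 : H p0.

Lemma shat_has_teacher V d t L C : shat Phi V H t L C d ->
  exists T, TH V H T /\ path_consistent T C.
Proof.
elim: d t L C => [|d IH] [y f|y f x ch] L C //=.
case: p0 Hp0 => xh yh Hxy /(_ xh yh (or_introl Hxy)) [_ [_ [_ /IH [T [TH_T]]]]].
by move=> /path_consistent_rcons [pcT _]; exists T.
Qed.

Fixpoint trunc (n : nat) (t : dfftree X Y) : dfftree X Y :=
  match n, t with
  | 0, _ => DLeaf (ty t) (tphi t)
  | n'.+1, DNode y f x ch => DNode y f x (fun xh yh => trunc n' (ch xh yh))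
  | _.+1, DLeaf _ _ => t
  end.

Lemma ty_trunc n t : ty (trunc n t) = ty t.
Proof. by case: n t => [|n] []. Qed.

Lemma tphi_trunc n t : tphi (trunc n t) = tphi t.
Proof. by case: n t => [|n] []. Qed.

Lemma shat_trunc V d t L C n : shat Phi V H t L C d -> n <= d ->
  shat Phi V H (trunc n t) L C n.
Proof.
elim: d t L C n => [|d IH] [y f|y f x ch] L C [|n] //=.
  by move=> sh _; apply: (@shat_has_teacher V d.+1 (DNode y f x ch) L).
move=> sh le_nd xh yh adm; have [? [? [? sh_c]]] := sh xh yh adm.
by rewrite ty_trunc tphi_trunc; do 3!split=> //; apply: IH.
Qed.

End NonemptyHistory.

Definition setroot (y : option Y) (f : option (feat X)) (t : dfftree X Y) :=
  match t with DLeaf _ _ => DLeaf y f | DNode _ _ x ch => DNode y f x ch end.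

Lemma shat_setroot V y f t L C d :
  shat Phi V H (setroot y f t) L C d <-> shat Phi V H t L C d.
Proof. by case: t => [? ?|? ? ? ?]; case: d. Qed.

Lemma shattered_setroot V t d : shat Phi V H t [::] [::] d ->
  shattered Phi V H (setroot None None t) d.
Proof. by move=> sh; split; [case: t sh|split; [case: t sh|apply/shat_setroot]]. Qed.

End Trees.

Section LowerBound.
Variables (X : Type) (Y : finType) (Phi : (X -> bool) -> Prop).
Variables (TC : teacher X Y -> Prop) (H : X * Y -> Prop).
Variable p0 : X * Y.
Hypothesis Hp0 : H p0.
Variable A : dff_alg X Y.
Hypothesis A_valid : valid_alg Phi H A.

Lemma revealed_rcons h pre x fb : revealed A pre (rcons h (x, fb)) =
  rcons (revealed A pre h) (x, if fb is Some (y, _) then y else (A (pre ++ h) x).2).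
Proof.
by elim: h pre => [|[x0 fb0] r IH] pre /=; rewrite ?cats0 // IH cat_rcons.
Qed.

Lemma protocol_hist_rcons h pre x fb :
  protocol_hist Phi A pre (rcons h (x, fb)) <->
  protocol_hist Phi A pre h /\
  if fb is Some (y, f) then y != (A (pre ++ h) x).2 /\ exists phi, f = Some phi /\ Phi phi
  else True.
Proof.
elim: h pre => [|[x0 fb0] r IH] pre /=; last by rewrite IH cat_rcons; tauto.
by rewrite cats0; split; [case|move=> [_ ?]].
Qed.

Lemma shat_forces_mistakes d t L C pre : shat Phi TC H t L C d ->
  protocol_hist Phi A [::] pre ->
  (forall p, List.In p (revealed A [::] pre) -> List.In p L) ->
  exists T, TH TC H T /\ path_consistent T C /\ exists xs, mistakes A T pre xs = d.
Proof.
elim: d t L C pre => [|d IH] [y f|y f x ch] L C pre //=.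
  by move=> [T [TH_T pcT]] _ _; exists T; do 2!split=> //; exists [::].
move=> sh hist revL; case out: (A pre x) => [xh yh].
have adm : H (xh, yh) \/ List.In (xh, yh) L.
  by case: (A_valid x hist); rewrite out; [left|move/revL; right].
have [Phi_c [feat_c [ne_c sh_c]]] := sh xh yh adm.
have [T0 [_ /path_consistent_rcons [_ /(_ _ (or_introl erefl)) [/= lab_c _]]]] :=
  shat_has_teacher Hp0 sh_c.
have [phi phi_c] : exists phi, tphi (ch xh yh) = Some phi.
  by case: (tphi (ch xh yh)) feat_c => [phi|/(_ ne_c)]; [exists phi|].
rewrite -lab_c phi_c /= in Phi_c ne_c sh_c.
have ne_y : lab T0 x != yh by apply/eqP => e; apply: ne_c; rewrite e.
have [||T [TH_T [/path_consistent_rcons [pcT /(_ _ (or_introl erefl)) [/= [lab_x expl_x]]]]]] :=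
  IH _ _ _ (rcons pre (x, Some (lab T0 x, Some phi))) sh_c.
- by apply/protocol_hist_rcons; rewrite cat0s out; split=> //; split=> //; exists phi.
- move=> p; rewrite revealed_rcons -cats1 => /List.in_app_iff [/revL|] ?;
    apply/List.in_app_iff; by [left|right].
move=> [xs mis]; exists T; do 2!split=> //; exists (x :: xs) => /=.
rewrite out /= lab_x expl_x; last by move=> [/eqP]; rewrite (negbTE ne_y).
by rewrite eq_sym (negbTE ne_y) mis.
Qed.

Lemma shattered_forces_mistakes t d : shattered Phi TC H t d ->
  exists T, TH TC H T /\ exists xs, mistakes A T [::] xs = d.
Proof.
move=> [_ [_ /shat_forces_mistakes sh]].
by have [//|//|T [TH_T [_ ?]]] := sh [::]; exists T.
Qed.

End LowerBound.

Lemma DFFdim_le_Mbound X (Y : finType) Phi (TC : teacher X Y -> Prop) H A :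
  (exists p, H p) -> valid_alg Phi H A -> ele (DFFdim Phi TC H) (Mbound A TC H).
Proof.
move=> [p0 Hp0] A_valid; apply: esup_sub => d [t] /=.
exact: (shattered_forces_mistakes Hp0 A_valid (TC := TC)).
Qed.

Section OptimalAlgorithm.
Variables (X : Type) (Y : finType) (Phi : (X -> bool) -> Prop).
Variables (TC : teacher X Y -> Prop) (H : X * Y -> Prop).
Hypothesis TC_teachers : teacher_class Phi TC.
Variable p0 : X * Y.
Hypothesis Hp0 : H p0.

(** The surviving teachers V and the revealed examples L stand for the
    teacher class and history H ∪ L of the remaining game. *)
Definition has_shattered (V : teacher X Y -> Prop) (L : seq (X * Y)) (d : nat) :=
  exists t, shat Phi V H t L [::] d.

Definition dim_le V L k := forall d, has_shattered V L d -> d <= k.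

Definition admissible (L : seq (X * Y)) (o : X * Y) := H o \/ List.In o L.

Definition restrict V x y xh f : teacher X Y -> Prop :=
  fun T => V T /\ lab T x = y /\ expl T x xh = f.

Definition good V L x (o : X * Y) := forall y phi, y <> o.2 -> Phi phi ->
  forall d, has_shattered (restrict V x y o.1 (Some phi)) (L ++ [:: (x, y)]) d ->
  exists2 d', has_shattered V L d' & d < d'.

Lemma has_shattered_leaf V L T : TH V H T -> has_shattered V L 0.
Proof. by exists (DLeaf None None), T. Qed.

Lemma has_shattered_weaken V V' L L' d :
  (forall p, List.In p L -> List.In p L') -> (forall T, V' T -> V T) ->
  has_shattered V' L' d -> has_shattered V L d.
Proof.
move=> subL subV [t sh]; exists t; apply: shat_weaken sh => // T [V'T cT] _.
by split=> //; split=> //; apply: subV.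
Qed.

Lemma node_of_children V L x K :
  (forall xh yh, admissible L (xh, yh) -> exists c y phi,
     [/\ ty c = Some y, tphi c = Some phi, y <> yh, Phi phi &
         shat Phi V H c (L ++ [:: (x, y)]) [:: EdgeInfo x xh yh (Some y) (Some phi)] K]) ->
  has_shattered V L K.+1.
Proof.
move=> children.
exists (DNode None None x (fun xh yh => epsilon (inhabits (DLeaf None None)) (fun c => exists y phi,
  [/\ ty c = Some y, tphi c = Some phi, y <> yh, Phi phi &
      shat Phi V H c (L ++ [:: (x, y)]) [:: EdgeInfo x xh yh (Some y) (Some phi)] K]))).
move=> xh yh adm /=.
have [y [phi [-> -> ne_y Phi_phi sh_c]]] :=
  epsilon_spec (inhabits (DLeaf None None)) _ (children xh yh adm).
by do 3!split=> //; case.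
Qed.

Lemma child_of_not_good V L x xh yh K : has_shattered V L K -> dim_le V L K ->
  ~ good V L x (xh, yh) -> exists c y phi,
     [/\ ty c = Some y, tphi c = Some phi, y <> yh, Phi phi &
         shat Phi V H c (L ++ [:: (x, y)]) [:: EdgeInfo x xh yh (Some y) (Some phi)] K].
Proof.
move=> shK leK notgood; apply: NNPP => nochild.
apply: notgood => y phi /= ne_y Phi_phi d [t sh_t]; apply: NNPP => nobigger.
have le_Kd : K <= d by rewrite leqNgt; apply/negP => ltdK; apply: nobigger; exists K.
apply: nochild; exists (setroot (Some y) (Some phi) (trunc K t)), y, phi.
split=> //; try by case: (trunc K t).
apply/shat_setroot; apply: shat_weaken (shat_trunc Hp0 sh_t le_Kd) => //.
move=> T [[VT [lab_x expl_x]] cT] _.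
by split=> // c [<-|[]]; rewrite /= lab_x expl_x.
Qed.

Lemma good_exists V L x k T : TH V H T -> dim_le V L k ->
  exists2 o, admissible L o & good V L x o.
Proof.
move=> TH_T lek; have [K [shK leK]] := ex_max_bounded (has_shattered_leaf L TH_T) lek.
apply: NNPP => nogood; suff /leK : has_shattered V L K.+1 by rewrite ltnn.
apply: (node_of_children (x := x)) => xh yh adm; apply: child_of_not_good => // g.
by apply: nogood; exists (xh, yh).
Qed.

Lemma good_restrict_dim_le V L x o y phi T k : good V L x o -> y <> o.2 -> Phi phi ->
  TH (restrict V x y o.1 (Some phi)) H T -> dim_le V L k ->
  exists2 k', k = k'.+1 & dim_le (restrict V x y o.1 (Some phi)) (L ++ [:: (x, y)]) k'.
Proof.
move=> g ne_y Phi_phi TH_T lek.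
have shrink d : has_shattered (restrict V x y o.1 (Some phi)) (L ++ [:: (x, y)]) d -> d < k.
  by move=> /(g _ _ ne_y Phi_phi) [d' /lek le_d' lt_d]; apply: leq_trans lt_d le_d'.
case: k lek shrink (shrink 0 (has_shattered_leaf _ TH_T)) => [//|k] _ shrink _.
by exists k => // d /shrink.
Qed.

Definition state := ((teacher X Y -> Prop) * seq (X * Y))%type.

Definition choose (st : state) (x : X) : X * Y :=
  epsilon (inhabits p0) (fun o => admissible st.2 o /\
    ((exists2 o', admissible st.2 o' & good st.1 st.2 x o') -> good st.1 st.2 x o)).

Lemma choose_spec st x : admissible st.2 (choose st x) /\
  ((exists2 o', admissible st.2 o' & good st.1 st.2 x o') -> good st.1 st.2 x (choose st x)).
Proof.
rewrite /choose; set P := fun o => _; apply: (epsilon_spec _ P).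
case: (classic (exists2 o', admissible st.2 o' & good st.1 st.2 x o')) => [[o ? ?]|none].
  by exists o.
by exists p0; split=> [|/none]; first left.
Qed.

Definition step (st : state) (e : X * feedback X Y) : state :=
  let: (x, fb) := e in
  let o := choose st x in
  match fb with
  | None => ((fun T => st.1 T /\ lab T x = o.2), st.2 ++ [:: (x, o.2)])
  | Some (y, f) => (restrict st.1 x y o.1 f, st.2 ++ [:: (x, y)])
  end.

Definition stateof (h : interaction X Y) : state := foldl step (TC, [::]) h.

Definition optimal_alg : dff_alg X Y := fun h x => choose (stateof h) x.

Lemma stateof_rcons h e : stateof (rcons h e) = step (stateof h) e.
Proof. by rewrite /stateof -cats1 foldl_cat. Qed.

Lemma stateof_revealed h pre :
  (stateof (pre ++ h)).2 = (stateof pre).2 ++ revealed optimal_alg pre h.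
Proof.
elim: h pre => [|[x fb] r IH] pre /=; first by rewrite !cats0.
by rewrite -cat_rcons IH stateof_rcons; case: fb => [[y f]|]; rewrite /= -catA.
Qed.

Lemma optimal_alg_valid : valid_alg Phi H optimal_alg.
Proof.
move=> h x _; have [adm _] := choose_spec (stateof h) x.
by case: adm => [|]; [left|rewrite -[h]cat0s stateof_revealed; right].
Qed.

Definition run_invariant T (st : state) k :=
  [/\ st.1 T, consistent T (fun p => List.In p st.2) & dim_le st.1 st.2 k].

Lemma invariant_correct T st x k : run_invariant T st k ->
  (choose st x).2 = lab T x -> run_invariant T (step st (x, None)) k.
Proof.
move=> [VT cT lek] ok; split=> /=.
- by split.
- by move=> p /List.in_app_iff [/cT|[<-|[]]].
- move=> d sh; apply: lek; apply: has_shattered_weaken sh => [p ?|T' []//].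
  by apply/List.in_app_iff; left.
Qed.

Lemma invariant_mistake T st x k : TH TC H T -> run_invariant T st k ->
  (choose st x).2 <> lab T x -> exists2 k', k = k'.+1 &
    run_invariant T (step st (x, Some (lab T x, expl T x (choose st x).1))) k'.
Proof.
move=> [TC_T cH] [VT cT lek] miss; have [adm goodif] := choose_spec st x.
set o := choose st x in adm goodif miss *.
have lab_o : lab T o.1 = o.2 by case: adm => [/cH|/cT].
have ne_lab : lab T x <> lab T o.1 by rewrite lab_o; apply: nesym.
have [phi [expl_o [Phi_phi _]]] := TC_teachers TC_T ne_lab.
have g := goodif (good_exists x (conj VT cH) lek).
have TH_T : TH (restrict st.1 x (lab T x) o.1 (Some phi)) H T by [].
have [k' -> lek'] := good_restrict_dim_le g (nesym miss) Phi_phi TH_T lek.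
exists k' => //; rewrite /= expl_o; split=> //= p /List.in_app_iff [/cT|[<-|[]]] //.
Qed.

Lemma optimal_alg_mistakes_le T xs : TH TC H T -> forall pre k,
  run_invariant T (stateof pre) k -> mistakes optimal_alg T pre xs <= k.
Proof.
move=> TH_T; elim: xs => [|x xs IH] pre k inv //=; rewrite /optimal_alg.
case: eqP => [ok|miss].
  by apply: IH; rewrite stateof_rcons; apply: invariant_correct.
have [k' -> inv'] := invariant_mistake TH_T inv miss.
by rewrite ltnS; apply: IH; rewrite stateof_rcons.
Qed.

Lemma optimal_alg_mistakes_le_dim k T xs :
  (forall d, (exists t, shattered Phi TC H t d) -> d <= k) ->
  TH TC H T -> mistakes optimal_alg T [::] xs <= k.
Proof.
move=> lek TH_T; apply: optimal_alg_mistakes_le => //; split=> //; first by case: TH_T.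
by move=> d [t /shattered_setroot sh]; apply: lek; eexists; exact: sh.
Qed.

End OptimalAlgorithm.

Theorem theorem1 (X : Type) (Y : finType) (Phi : (X -> bool) -> Prop)
    (TC : teacher X Y -> Prop) (hTC : teacher_class Phi TC)
    (H : X * Y -> Prop) (hHne : exists p, H p)
    (hcons : exists T, TH TC H T) :
  (exists A : dff_alg X Y, valid_alg Phi H A /\ Mbound A TC H = DFFdim Phi TC H) /\
  (forall A : dff_alg X Y, valid_alg Phi H A -> ele (DFFdim Phi TC H) (Mbound A TC H)).
Proof.
split=> [|A]; last exact: DFFdim_le_Mbound.
have [p0 Hp0] := hHne.
have A_valid : valid_alg Phi H (optimal_alg Phi TC H p0) by apply: optimal_alg_valid.
exists (optimal_alg Phi TC H p0); split=> //; apply: esup_eq.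
  by move=> d [t] /=; exact: (shattered_forces_mistakes Hp0 A_valid (TC := TC)).
by move=> k lek _ [T [TH_T [xs <-]]]; apply: optimal_alg_mistakes_le_dim.
Qed.
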